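(* Let $R$ be a commutative ring of characteristic $2$ and $M=\begin{pmatrix} a&b\\ c&d\end{pmatrix}$ with $a,b,c,d\in R$. Put $t=a+d$. Then for all integers $s\ge0$, \[M^{2^s}=\begin{pmatrix} a^{2^s}+\sum_{i=0}^{s-1}b^{2^i}c^{2^i}t^{2^s-2^{i+1}} & bt^{2^s-1}\\ ct^{2^s-1} & d^{2^s}+\sum_{i=0}^{s-1}b^{2^i}c^{2^i}t^{2^s-2^{i+1}}\end{pmatrix}.\]
   Context: A unital ring has characteristic $2$ if $1+1=0$ in it. *)

From mathcomp Require Import all_boot all_order all_algebra.
Set Implicit Arguments. Unset Strict Implicit. Unset Printing Implicit Defensive.
Import GRing.Theory.
Local Open Scope ring_scope.

Definition mx2 (R : comPzRingType) (a b c d : R) : 'M[R]_2 :=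
  \matrix_(i < 2, j < 2)
    if (i == 0 :> nat) then (if (j == 0 :> nat) then a else b)
    else (if (j == 0 :> nat) then c else d).

(* Square repeatedly: the square of [[x, u], [v, y]] is
   [[x^2 + uv, u(x+y)], [v(x+y), y^2 + uv]], and in characteristic 2 squaring is
   additive.  Hence if the diagonal entries after s squarings are a^(2^s) + S and
   d^(2^s) + S, their sum is the Frobenius image t^(2^s) of the trace, the common
   term S is simply squared, and one new summand b c t^(2^(s+1) - 2) appears. *)

From mathcomp Require Import all_boot all_order all_algebra.
From mathcomp Require Import ring zify.
Set Implicit Arguments. Unset Strict Implicit. Unset Printing Implicit Defensive.
Import GRing.Theory.
Local Open Scope ring_scope.

Lemma mx2_sqr (R : comPzRingType) (a b c d : R) :
  mx2 a b c d ^+ 2 = mx2 (a ^+ 2 + b * c) (b * (a + d)) (c * (a + d)) (d ^+ 2 + b * c).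
Proof.
rewrite expr2; apply/matrixP => i j; rewrite !mxE !big_ord_recl big_ord0 !mxE /=.
by case: i => [[|[|i]] Hi] //; case: j => [[|[|j]] Hj] //=; ring.
Qed.

(* [pchar R] and the Frobenius lemmas of ssralg require a nontrivial ring, which
   a comPzRingType need not be. *)
Section Char2.

Variables (R : comPzRingType) (char2 : 1 + 1 = 0 :> R).

Lemma addrr_char2 (x : R) : x + x = 0.
Proof. by rewrite -[x]mulr1 -mulrDr char2 mulr0. Qed.

Lemma sqrrD_char2 (x y : R) : (x + y) ^+ 2 = x ^+ 2 + y ^+ 2.
Proof. by rewrite sqrrD mulr2n addrr_char2 addr0. Qed.

Lemma exprD_pow2_char2 (x y : R) (n : nat) :
  (x + y) ^+ (2 ^ n) = x ^+ (2 ^ n) + y ^+ (2 ^ n).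
Proof. by elim: n => // n IHn; rewrite expnSr !exprM IHn sqrrD_char2. Qed.

Lemma sqr_sum_char2 (n : nat) (F : 'I_n -> R) :
  (\sum_(i < n) F i) ^+ 2 = \sum_(i < n) F i ^+ 2.
Proof. by apply: (big_morph (fun x : R => x ^+ 2)); [exact: sqrrD_char2 | rewrite expr0n]. Qed.

Lemma mx2_sqr_char2 (x y z u v : R) :
  mx2 (x + z) u v (y + z) ^+ 2 =
  mx2 (x ^+ 2 + z ^+ 2 + u * v) (u * (x + y)) (v * (x + y)) (y ^+ 2 + z ^+ 2 + u * v).
Proof.
have trace_xy : x + z + (y + z) = x + y by rewrite addrACA addrr_char2 addr0.
by rewrite mx2_sqr trace_xy !sqrrD_char2.
Qed.

Definition pow2_trace_sum (b c t : R) (s : nat) : R :=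
  \sum_(i < s) b ^+ (2 ^ i) * c ^+ (2 ^ i) * t ^+ (2 ^ s - 2 ^ i.+1).

Lemma pow2_trace_sumS (b c t : R) (s : nat) :
  pow2_trace_sum b c t s.+1 =
  pow2_trace_sum b c t s ^+ 2 + b * c * t ^+ (2 ^ s.+1 - 2).
Proof.
rewrite /pow2_trace_sum big_ord_recl addrC sqr_sum_char2 /= expn0 !expr1 expn1.
congr (_ + _); apply: eq_bigr => i _.
by rewrite !exprMn -!exprM -!expnSr mulnBl -!expnSr.
Qed.

End Char2.

Theorem lemma4p2 (R : comPzRingType) (char2 : 1 + 1 = 0 :> R) (a b c d : R) (s : nat) :
  let t := a + d in
  let S := \sum_(i < s) b ^+ (2 ^ i) * c ^+ (2 ^ i) * t ^+ (2 ^ s - 2 ^ i.+1) in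
  (mx2 a b c d) ^+ (2 ^ s) =
  mx2 (a ^+ (2 ^ s) + S) (b * t ^+ (2 ^ s - 1))
      (c * t ^+ (2 ^ s - 1)) (d ^+ (2 ^ s) + S).
Proof.
move=> t; rewrite -/(pow2_trace_sum b c t s).
elim: s => [|s IHs]; first by rewrite /pow2_trace_sum big_ord0 subnn !expr0 !mulr1 !addr0.
have pow2_gt0 := expn_gt0 2 s.
have odd_exp : (2 ^ s.+1 - 1 = (2 ^ s - 1) + 2 ^ s)%N by rewrite expnSr; lia.
have even_exp : (2 ^ s.+1 - 2 = (2 ^ s - 1) + (2 ^ s - 1))%N by rewrite expnSr; lia.
rewrite expnSr exprM IHs mx2_sqr_char2 // -exprD_pow2_char2 // pow2_trace_sumS //.
rewrite -!exprM -!expnSr odd_exp even_exp !exprD.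
by congr (mx2 _ _ _ _); ring.
Qed.
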